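(* Fix an integer $q\ge2$, $c\in\mathbb{R}$ and $\lambda\in(-1/q-c,-c)$ such that $f_c$ satisfies the pre-$q$-Sturmian condition for $\lambda$, with Lipschitz function $\psi$ and constant $\beta$; regard $\psi$ as a $1$-periodic function on $\mathbb{R}$ and $T(x)=qx$ on $\mathbb{R}$. Let $\theta=\lambda+1/q+c\in(0,1/q)$ and $f=f_0$. Then: (i) For any $x\in(\lambda+q^{-1},\lambda+2q^{-1})$, with $t:=x-\lambda-q^{-1}$, $$\psi(T(x))-\psi(T(\lambda+q^{-1}))\ge f(q^{-1}-\theta-t)-f(q^{-1}-\theta)+f'(\theta)\frac{t}{q-1}.$$ (i)' For any $x\in(\lambda-q^{-1},\lambda)$, with $t:=\lambda-x$, $$\psi(T(x))-\psi(T(\lambda))\ge f(\theta-t)-f(\theta)+f'(q^{-1}-\theta)\frac{t}{q-1}.$$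
   Context: $\mathbb{T}=\mathbb{R}/\mathbb{Z}$. $f_0(x)=\log\left|\frac{\sin\pi qx}{\sin\pi x}\right|$ (value $\log q$ at integers), a $1$-periodic even function, real-analytic and strictly concave on $(-1/q,1/q)$; $f_c(x)=f_0(x+c)$. $C_\lambda=[\lambda,\lambda+1/q]\bmod1$. The function $f_c$ satisfies the pre-$q$-Sturmian condition for $\lambda$ if $f_c$ is Lipschitz on $C_\lambda$ and there exist a Lipschitz $\psi:\mathbb{T}\to\mathbb{R}$ and $\beta\in\mathbb{R}$ with $f_c(x)+\psi(x)-\psi(Tx)=\beta$ for all $x\in C_\lambda$, where $Tx=qx\bmod 1$. *)

From Stdlib Require Import Reals Lra.
From Coquelicot Require Import Coquelicot.
Open Scope R_scope.

Definition f0 (q : nat) (x : R) : R :=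
  if Req_EM_T (sin (PI * x)) 0 then ln (INR q)
  else ln (Rabs (sin (PI * INR q * x) / sin (PI * x))).

Definition fc (q : nat) (c x : R) : R := f0 q (x + c).

(* distance on T = R/Z between the classes of x and y:
   distance from x - y to the nearest integer *)
Definition dT (x y : R) : R :=
  Rabs ((x - y) - IZR (Int_part ((x - y) + /2))).

(* C_lambda = [lambda, lambda + 1/q] mod 1, as a set of reals (a union of
   integer translates) *)
Definition C_set (q : nat) (lam x : R) : Prop :=
  exists k : Z, lam <= x - IZR k <= lam + / INR q.

Definition periodic1 (psi : R -> R) : Prop := forall x, psi (x + 1) = psi x.

Definition lipschitz_T (psi : R -> R) : Prop :=
  exists L : R, forall x y, Rabs (psi x - psi y) <= L * dT x y.

Definition lipschitz_on_T (S : R -> Prop) (g : R -> R) : Prop :=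
  exists L : R, forall x y, S x -> S y -> Rabs (g x - g y) <= L * dT x y.

(* pre-q-Sturmian condition for lambda, with witnesses psi (1-periodic,
   Lipschitz) and beta; T x = q x mod 1, so psi (T x) = psi (q x). *)
Definition pre_sturmian_with (q : nat) (c lam : R) (psi : R -> R) (beta : R)
  : Prop :=
  lipschitz_on_T (C_set q lam) (fc q c) /\
  periodic1 psi /\ lipschitz_T psi /\
  forall x, C_set q lam x -> fc q c x + psi x - psi (INR q * x) = beta.

(* Write F := f_c, and let K bound the difference quotients of F from below on
   [lam, lam + 1/q].  There the cohomological equation reads psi (q x) = psi x + F x - beta,
   and psi + F takes the same value at both endpoints, so a lower bound r for the difference
   quotients of psi over intervals of length < 1 improves, through the inverse branches of
   x |-> q x mod 1, to (r + K) / q.  The best such bound m (finite, as psi is periodic and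
   Lipschitz) thus satisfies m >= (m + K) / q, i.e. m >= K / (q - 1).  As f_0 is concave on
   (-1/q, 1/q), the difference quotients of F on [lam, lam + 1/q] lie between f_0'(theta) and
   -f_0'(1/q - theta); the bound applied to psi and to -psi gives (i) and (i)'. *)

From Stdlib Require Import Reals Lra Lia.
From Coquelicot Require Import Coquelicot.
Open Scope R_scope.

Lemma periodic1_add_IZR (psi : R -> R) (k : Z) (x : R) :
  periodic1 psi -> psi (x + IZR k) = psi x.
Proof.
  intros Hp. revert x. induction k as [|k IH|k IH] using Z.peano_ind; intros x.
  - now rewrite Rplus_0_r.
  - rewrite succ_IZR, <- (IH x), <- (Hp (x + IZR k)). f_equal. ring.
  - rewrite <- Z.sub_1_r, minus_IZR, <- (IH x), <- (Hp (x + (IZR k - IZR 1))).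
    f_equal. simpl. ring.
Qed.

Lemma dT_le_Rabs (x y : R) : dT x y <= Rabs (x - y).
Proof.
  unfold dT. set (d := x - y).
  destruct (base_Int_part (d + /2)) as [Hlo Hhi].
  set (n := Int_part (d + /2)) in *.
  destruct (Rle_or_lt (/2) (Rabs d)) as [Hd|Hd].
  - apply Rle_trans with (/2); [apply Rabs_le; lra | exact Hd].
  - apply Rabs_def2 in Hd.
    assert (Hn : n = 0%Z).
    { assert (IZR n < 1) as H1%lt_IZR by lra.
      assert (-1 < IZR n) as H2%(lt_IZR (-1)) by lra. lia. }
    rewrite Hn, Rminus_0_r. apply Rle_refl.
Qed.

Lemma lipschitz_T_Rabs (psi : R -> R) :
  lipschitz_T psi -> exists L, forall x y, Rabs (psi x - psi y) <= L * Rabs (x - y).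
Proof.
  intros [L HL]. exists (Rabs L). intros x y.
  apply Rle_trans with (1 := HL x y).
  assert (0 <= dT x y) by apply Rabs_pos.
  apply Rle_trans with (Rabs L * dT x y).
  - apply Rmult_le_compat_r; [assumption | apply Rle_abs].
  - apply Rmult_le_compat_l; [apply Rabs_pos | apply dT_le_Rabs].
Qed.

Lemma Rinv_in_0_1 (q : R) : 1 < q -> 0 < / q < 1.
Proof.
  intros Hq. split; [apply Rinv_0_lt_compat; lra|].
  rewrite <- Rinv_1. apply Rinv_lt_contravar; lra.
Qed.

Definition slope_ge (g : R -> R) (r : R) : Prop :=
  forall a b, a <= b -> b - a < 1 -> g b - g a >= r * (b - a).

Lemma slope_ge_le (g : R -> R) (r r' : R) : r' <= r -> slope_ge g r -> slope_ge g r'.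
Proof. intros Hr Hg a b Hab Hba. specialize (Hg a b Hab Hba). nra. Qed.

Lemma slope_ge_of_lipschitz (g : R -> R) (L : R) :
  (forall x y, Rabs (g x - g y) <= L * Rabs (x - y)) -> slope_ge g (- L).
Proof.
  intros HL a b Hab _. specialize (HL b a).
  rewrite (Rabs_right (b - a)) in HL by lra.
  assert (- (g b - g a) <= Rabs (g b - g a)) by (rewrite <- Rabs_Ropp; apply Rle_abs).
  rewrite Ropp_mult_distr_l_reverse. lra.
Qed.

Lemma slope_ge_periodic_nonpos (g : R -> R) (r : R) :
  periodic1 g -> slope_ge g r -> r <= 0.
Proof.
  intros Hp Hg.
  assert (H1 := Hg 0 (/2) ltac:(lra) ltac:(lra)).
  assert (H2 := Hg (/2) 1 ltac:(lra) ltac:(lra)).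
  assert (g 1 = g 0) by (rewrite <- (Rplus_0_l 1); apply Hp).
  lra.
Qed.

Lemma slope_ge_lub (g : R -> R) (m : R) : is_lub (slope_ge g) m -> slope_ge g m.
Proof.
  intros [_ Hleast] a b Hab Hba.
  destruct (Rle_lt_or_eq_dec a b Hab) as [Hlt | ->]; [|lra].
  assert (Hm : m <= (g b - g a) / (b - a)).
  { apply Hleast. intros r Hr. specialize (Hr a b Hab Hba).
    apply (Rmult_le_reg_r (b - a)); [lra|].
    unfold Rdiv. rewrite Rmult_assoc, Rinv_l by lra. lra. }
  apply (Rmult_le_compat_r (b - a)) in Hm; [|lra].
  unfold Rdiv in Hm. rewrite Rmult_assoc, Rinv_l in Hm by lra. lra.
Qed.

Section Coboundary.
Variables (q lam beta : R) (psi F : R -> R).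
Hypothesis q_gt_1 : 1 < q.
Hypothesis psi_periodic : periodic1 psi.
Hypothesis coboundary_eq :
  forall x, lam <= x <= lam + / q -> F x + psi x - psi (q * x) = beta.

Lemma psi_mul_add_IZR (x : R) (k : Z) :
  lam <= x <= lam + / q -> psi (q * x + IZR k) = psi x + F x - beta.
Proof.
  intros Hx. rewrite periodic1_add_IZR by assumption.
  specialize (coboundary_eq x Hx). lra.
Qed.

Lemma coboundary_endpoints : psi lam + F lam = psi (lam + / q) + F (lam + / q).
Proof.
  assert (0 < / q) by (apply Rinv_0_lt_compat; lra).
  assert (E0 := psi_mul_add_IZR lam 1 ltac:(lra)).
  assert (E1 := psi_mul_add_IZR (lam + / q) 0 ltac:(lra)).
  replace (q * (lam + / q) + IZR 0) with (q * lam + IZR 1) in E1 by (simpl; field; lra).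
  lra.
Qed.

Lemma exists_preimage (y : R) :
  exists k x, lam <= x < lam + / q /\ y = q * x + IZR k.
Proof.
  set (k := Int_part (y - q * lam)).
  destruct (base_Int_part (y - q * lam)) as [Hlo Hhi]. fold k in Hlo, Hhi.
  exists k, (lam + (y - q * lam - IZR k) / q). split; [split|].
  - assert (0 <= (y - q * lam - IZR k) / q)
      by (apply Rmult_le_pos; [lra | left; apply Rinv_0_lt_compat; lra]).
    lra.
  - apply Rplus_lt_compat_l. unfold Rdiv. rewrite <- (Rmult_1_l (/ q)) at 2.
    apply Rmult_lt_compat_r; [apply Rinv_0_lt_compat|]; lra.
  - field. lra.
Qed.

Variable K : R.
Hypothesis F_slope : forall u v, lam <= u -> u <= v -> v <= lam + / q -> F v - F u >= K * (v - u).

(* As [b - a < 1], the preimages [xa], [xb] of [a], [b] lie in the same branch of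
   [x |-> q x mod 1] or in adjacent ones; in the latter case the increment is split at
   the endpoints of [[lam, lam + 1/q]], where [psi + F] takes the same value. *)
Lemma slope_ge_renormalize (r : R) : slope_ge psi r -> slope_ge psi ((r + K) / q).
Proof.
  intros Hr a b Hab Hba.
  assert (Hinv := Rinv_in_0_1 q q_gt_1).
  destruct (exists_preimage a) as [ka [xa [Ha ->]]].
  destruct (exists_preimage b) as [kb [xb [Hb ->]]].
  assert (Hq : q * / q = 1) by (field; lra).
  assert (Hk : (kb = ka \/ kb = ka + 1)%Z).
  { assert (Hgap : -1 < IZR kb - IZR ka < 2) by nra.
    rewrite <- minus_IZR in Hgap. destruct Hgap as [H1%(lt_IZR (-1)) H2%lt_IZR]. lia. }
  rewrite !psi_mul_add_IZR by lra.
  destruct Hk as [-> | ->].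
  - assert (xa <= xb) by nra.
    assert (Hpsi := Hr xa xb ltac:(lra) ltac:(lra)).
    assert (HF := F_slope xa xb ltac:(lra) ltac:(lra) ltac:(lra)).
    replace ((r + K) / q * (q * xb + IZR ka - (q * xa + IZR ka)))
      with ((r + K) * (xb - xa)) by (field; lra).
    lra.
  - rewrite plus_IZR.
    assert (Hend := coboundary_endpoints).
    assert (Hpsi1 := Hr lam xb ltac:(lra) ltac:(lra)).
    assert (Hpsi2 := Hr xa (lam + / q) ltac:(lra) ltac:(lra)).
    assert (HF1 := F_slope lam xb ltac:(lra) ltac:(lra) ltac:(lra)).
    assert (HF2 := F_slope xa (lam + / q) ltac:(lra) ltac:(lra) ltac:(lra)).
    replace ((r + K) / q * (q * xb + (IZR ka + IZR 1) - (q * xa + IZR ka)))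
      with ((r + K) * ((xb - lam) + (lam + / q - xa))) by (simpl; field; lra).
    lra.
Qed.

Hypothesis psi_lipschitz :
  exists L, forall x y, Rabs (psi x - psi y) <= L * Rabs (x - y).

Lemma slope_ge_coboundary : slope_ge psi (K / (q - 1)).
Proof.
  destruct psi_lipschitz as [L HL].
  assert (Hbound : bound (slope_ge psi)).
  { exists 0. intros r. apply slope_ge_periodic_nonpos, psi_periodic. }
  destruct (completeness _ Hbound (ex_intro _ _ (slope_ge_of_lipschitz _ _ HL)))
    as [m Hlub].
  assert (Hm := slope_ge_lub _ _ Hlub).
  assert (Hstep : (m + K) / q <= m) by (apply Hlub, slope_ge_renormalize, Hm).
  apply (slope_ge_le _ m); [|exact Hm].
  apply (Rmult_le_compat_r q) in Hstep; [|lra].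
  unfold Rdiv in *. rewrite Rmult_assoc, Rinv_l in Hstep by lra.
  apply (Rmult_le_reg_r (q - 1)); [lra|].
  rewrite Rmult_assoc, Rinv_l by lra. lra.
Qed.

Lemma coboundary_increment_right (t : R) :
  0 <= t <= / q ->
  psi (q * (lam + / q + t)) - psi (q * (lam + / q)) >= F (lam + t) - F lam + K * (t / (q - 1)).
Proof.
  intros Ht.
  assert (Hinv := Rinv_in_0_1 q q_gt_1).
  replace (q * (lam + / q + t)) with (q * (lam + t) + IZR 1) by (simpl; field; lra).
  replace (q * (lam + / q)) with (q * lam + IZR 1) by (simpl; field; lra).
  rewrite !psi_mul_add_IZR by lra.
  assert (Hs := slope_ge_coboundary lam (lam + t) ltac:(lra) ltac:(lra)).
  replace (K * (t / (q - 1))) with (K / (q - 1) * (lam + t - lam)) by (field; lra).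
  lra.
Qed.
End Coboundary.

Lemma coboundary_increment_left (q lam beta K : R) (psi F : R -> R) :
  1 < q -> periodic1 psi ->
  (forall x, lam <= x <= lam + / q -> F x + psi x - psi (q * x) = beta) ->
  (forall u v, lam <= u -> u <= v -> v <= lam + / q -> F v - F u <= - K * (v - u)) ->
  (exists L, forall x y, Rabs (psi x - psi y) <= L * Rabs (x - y)) ->
  forall t, 0 <= t <= / q ->
  psi (q * (lam - t)) - psi (q * lam)
    >= F (lam + / q - t) - F (lam + / q) + K * (t / (q - 1)).
Proof.
  intros Hq Hp Heq HF [L HL] t Ht.
  assert (Hinv := Rinv_in_0_1 q Hq).
  assert (Hp' : periodic1 (fun y => - psi y)) by (intros y; now rewrite Hp).
  assert (Heq' : forall x, lam <= x <= lam + / q ->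
            - F x + - psi x - - psi (q * x) = - beta) by (intros x Hx; rewrite <- (Heq x Hx); ring).
  assert (HL' : forall x y, Rabs (- psi x - - psi y) <= L * Rabs (x - y)).
  { intros x y. rewrite <- Rabs_Ropp. replace (- (- psi x - - psi y)) with (psi x - psi y) by ring.
    apply HL. }
  assert (Hs := slope_ge_coboundary q lam (- beta) (fun y => - psi y) (fun y => - F y) Hq Hp'
    Heq' K ltac:(intros u v Hu Huv Hv; specialize (HF u v Hu Huv Hv); lra) (ex_intro _ L HL')
    (lam + / q - t) (lam + / q) ltac:(lra) ltac:(lra)).
  cbv beta in Hs.
  replace (q * (lam - t)) with (q * (lam + / q - t) + IZR (-1)) by (simpl; field; lra).
  replace (q * lam) with (q * lam + IZR 0) by (simpl; ring).
  rewrite !(psi_mul_add_IZR q lam beta psi F Hp Heq) by lra.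
  assert (Hend := coboundary_endpoints q lam beta psi F Hq Hp Heq).
  replace (K * (t / (q - 1))) with (K / (q - 1) * (lam + / q - (lam + / q - t))) by (field; lra).
  lra.
Qed.

Lemma is_derive_continuity_pt (f : R -> R) (x l : R) : is_derive f x l -> continuity_pt f x.
Proof. intros H. apply derivable_continuous_pt. exists l. apply is_derive_Reals, H. Qed.

Lemma antitone_derive_slope_bounds (g g' : R -> R) (a b u v : R) :
  (forall x, a <= x <= b -> is_derive g x (g' x)) ->
  (forall x y, a <= x -> x <= y -> y <= b -> g' y <= g' x) ->
  a <= u -> u <= v -> v <= b ->
  g' b * (v - u) <= g v - g u <= g' a * (v - u).
Proof.
  intros Hd Hanti Hau Huv Hvb.
  destruct (MVT_gen g u v g') as [c [Hc ->]];
    rewrite ?Rmin_left, ?Rmax_right in * by lra.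
  - intros x Hx. apply Hd. lra.
  - intros x Hx. apply (is_derive_continuity_pt _ _ (g' x)), Hd. lra.
  - assert (g' b <= g' c) by (apply Hanti; lra).
    assert (g' c <= g' a) by (apply Hanti; lra).
    split; apply Rmult_le_compat_r; lra.
Qed.

(* [sin_ratio n y] is the trigonometric polynomial [sin (n y) / sin y] (Chebyshev's
   [U_(n-1) (cos y)]), given by a recursion that also makes sense where [sin y = 0];
   [sin_ratio' n] is its derivative. *)
Fixpoint sin_ratio (n : nat) (y : R) : R :=
  match n with
  | O => 0
  | S m => sin_ratio m y * cos y + cos (INR m * y)
  end.

Fixpoint sin_ratio' (n : nat) (y : R) : R :=
  match n with
  | O => 0
  | S m => sin_ratio' m y * cos y - sin_ratio m y * sin y - INR m * sin (INR m * y)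
  end.

Lemma sin_ratio_mul_sin (n : nat) (y : R) : sin_ratio n y * sin y = sin (INR n * y).
Proof.
  induction n as [|m IH]; simpl sin_ratio.
  - now rewrite Rmult_0_l, Rmult_0_l, sin_0.
  - rewrite S_INR. replace ((INR m + 1) * y) with (INR m * y + y) by ring.
    rewrite sin_plus, <- IH. ring.
Qed.

Lemma sin_ratio_even (n : nat) (y : R) : sin_ratio n (- y) = sin_ratio n y.
Proof.
  induction n as [|m IH]; simpl sin_ratio; [reflexivity|].
  replace (INR m * - y) with (- (INR m * y)) by ring.
  now rewrite IH, !cos_neg.
Qed.

Lemma sin_ratio_0 (n : nat) : sin_ratio n 0 = INR n.
Proof.
  induction n as [|m IH]; simpl sin_ratio; [reflexivity|].
  rewrite IH, Rmult_0_r, cos_0, S_INR. ring.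
Qed.

Lemma sin_ratio'_odd (n : nat) (y : R) : sin_ratio' n (- y) = - sin_ratio' n y.
Proof.
  induction n as [|m IH]; simpl sin_ratio'; [ring|].
  replace (INR m * - y) with (- (INR m * y)) by ring.
  rewrite IH, sin_ratio_even, cos_neg, !sin_neg. ring.
Qed.

Lemma sin_ratio'_0 (n : nat) : sin_ratio' n 0 = 0.
Proof. assert (E := sin_ratio'_odd n 0). rewrite Ropp_0 in E. lra. Qed.

Lemma sin_ratio'_mul_sin (n : nat) (y : R) :
  sin_ratio' n y * sin y + sin_ratio n y * cos y = INR n * cos (INR n * y).
Proof.
  induction n as [|m IH]; simpl sin_ratio; simpl sin_ratio'.
  - simpl. ring.
  - rewrite S_INR. replace ((INR m + 1) * y) with (INR m * y + y) by ring.
    rewrite cos_plus.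
    transitivity (cos y * (sin_ratio' m y * sin y + sin_ratio m y * cos y)
      - sin_ratio m y * sin y * sin y - INR m * sin (INR m * y) * sin y
      + cos (INR m * y) * cos y); [ring|].
    rewrite IH, sin_ratio_mul_sin. ring.
Qed.

Lemma is_derive_sin_ratio (n : nat) (y : R) : is_derive (sin_ratio n) y (sin_ratio' n y).
Proof.
  induction n as [|m IH]; simpl sin_ratio; simpl sin_ratio'.
  - apply (is_derive_const (V := R_NormedModule)).
  - apply (is_derive_ext (fun t => sin_ratio m t * cos t + cos (INR m * t))); [reflexivity|].
    replace (sin_ratio' m y * cos y - sin_ratio m y * sin y - INR m * sin (INR m * y))
      with (sin_ratio' m y * cos y + sin_ratio m y * (- sin y) + - INR m * sin (INR m * y))
      by ring.
    apply (is_derive_plus (fun t => sin_ratio m t * cos t) (fun t => cos (INR m * t))).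
    + apply (is_derive_mult (sin_ratio m) cos); [exact IH | | intros; apply Rmult_comm].
      auto_derive; auto; ring.
    + auto_derive; auto; ring.
Qed.

Lemma is_derive_nonneg_le (g g' : R -> R) (a b : R) :
  a <= b -> (forall x, a <= x <= b -> is_derive g x (g' x)) ->
  (forall x, a <= x <= b -> 0 <= g' x) -> g a <= g b.
Proof.
  intros Hab Hd Hpos.
  destruct (MVT_gen g a b g') as [c [Hc E]];
    rewrite ?Rmin_left, ?Rmax_right in * by lra.
  - intros x Hx. apply Hd. lra.
  - intros x Hx. apply (is_derive_continuity_pt _ _ (g' x)), Hd. lra.
  - assert (0 <= g' c * (b - a)) by (apply Rmult_le_pos; [apply Hpos|]; lra). lra.
Qed.

Lemma Rabs_sin_mul_le (n : nat) (y : R) : Rabs (sin (INR n * y)) <= INR n * Rabs (sin y).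
Proof.
  induction n as [|m IH].
  - simpl. rewrite Rmult_0_l, sin_0, Rabs_R0. lra.
  - rewrite S_INR. replace ((INR m + 1) * y) with (INR m * y + y) by ring.
    rewrite sin_plus.
    eapply Rle_trans; [apply Rabs_triang|]. rewrite !Rabs_mult.
    assert (Rabs (cos y) <= 1) by (apply Rabs_le; apply COS_bound).
    assert (Rabs (cos (INR m * y)) <= 1) by (apply Rabs_le; apply COS_bound).
    assert (0 <= Rabs (sin (INR m * y))) by apply Rabs_pos.
    assert (0 <= Rabs (sin y)) by apply Rabs_pos.
    nra.
Qed.

Section SinRatio.
Variable n : nat.
Hypothesis n_pos : (1 <= n)%nat.

Lemma sin_pos_of_mul_lt_PI (y : R) :
  0 < y -> INR n * y < PI -> 0 < sin y /\ 0 < sin (INR n * y).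
Proof.
  intros Hy Hny. apply le_INR in n_pos. simpl in n_pos.
  split; apply sin_gt_0; nra.
Qed.

Lemma sin_ratio_pos (y : R) : - PI < INR n * y < PI -> 0 < sin_ratio n y.
Proof.
  assert (Hn := le_INR _ _ n_pos). simpl in Hn.
  assert (Hpos : forall z, 0 < z -> INR n * z < PI -> 0 < sin_ratio n z).
  { intros z Hz Hnz. destruct (sin_pos_of_mul_lt_PI z Hz Hnz) as [Hs Hns].
    rewrite <- sin_ratio_mul_sin in Hns. nra. }
  intros Hy. destruct (Rtotal_order y 0) as [Hneg|[->|Hgt]].
  - rewrite <- (Ropp_involutive y), sin_ratio_even. apply Hpos; nra.
  - rewrite sin_ratio_0. lra.
  - apply Hpos; lra.
Qed.

Definition cot_diff (y : R) : R := INR n * cos (INR n * y) / sin (INR n * y) - cos y / sin y.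

Lemma cot_diff_nonpos (y : R) : 0 < y -> INR n * y < PI -> cot_diff y <= 0.
Proof.
  intros Hy Hny. assert (Hn := le_INR _ _ n_pos). simpl in Hn.
  set (k := fun z => sin (INR n * z) * cos z - INR n * cos (INR n * z) * sin z).
  assert (Hk : k 0 <= k y).
  { apply (is_derive_nonneg_le k (fun z => (INR n ^ 2 - 1) * sin (INR n * z) * sin z));
      [lra | intros z _; unfold k; auto_derive; auto; ring |].
    intros z Hz. destruct (Req_dec z 0) as [->|Hz0].
    - rewrite Rmult_0_r, sin_0. lra.
    - destruct (sin_pos_of_mul_lt_PI z ltac:(lra) ltac:(nra)).
      apply Rmult_le_pos; [apply Rmult_le_pos|]; nra. }
  replace (k 0) with 0 in Hk by (unfold k; rewrite Rmult_0_r, sin_0; ring).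
  destruct (sin_pos_of_mul_lt_PI y Hy Hny) as [Hs Hns].
  replace (cot_diff y) with (- k y / (sin (INR n * y) * sin y))
    by (unfold cot_diff, k; field; lra).
  assert (0 < / (sin (INR n * y) * sin y)) by (apply Rinv_0_lt_compat; nra).
  unfold Rdiv. nra.
Qed.

Lemma cot_diff_antitone (y z : R) : 0 < y -> y <= z -> INR n * z < PI -> cot_diff z <= cot_diff y.
Proof.
  intros Hy Hyz Hnz. assert (Hn := le_INR _ _ n_pos). simpl in Hn.
  assert (Hs : forall c, y <= c <= z -> 0 < sin c /\ 0 < sin (INR n * c))
    by (intros c Hc; apply sin_pos_of_mul_lt_PI; nra).
  enough (- cot_diff y <= - cot_diff z) by lra.
  apply (is_derive_nonneg_le (fun c => - cot_diff c)
    (fun c => INR n ^ 2 / sin (INR n * c) ^ 2 - 1 / sin c ^ 2)); [exact Hyz| |].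
  - intros c Hc. destruct (Hs c Hc) as [S1 S2]. unfold cot_diff. auto_derive.
    + repeat split; lra.
    + assert (E1 := sin2_cos2 c). assert (E2 := sin2_cos2 (INR n * c)). unfold Rsqr in E1, E2.
      field_simplify; [|lra|lra]. f_equal.
      replace (cos (INR n * c) ^ 2) with (1 - sin (INR n * c) ^ 2) by (simpl; lra).
      replace (cos c ^ 2) with (1 - sin c ^ 2) by (simpl; lra). ring.
  - intros c Hc. destruct (Hs c Hc) as [S1 S2].
    assert (B := Rabs_sin_mul_le n c). rewrite !Rabs_right in B by lra.
    assert (Hsq : sin (INR n * c) ^ 2 <= (INR n * sin c) ^ 2) by (apply pow_incr; lra).
    apply Rge_le, Rge_minus, Rle_ge.
    apply (Rmult_le_reg_r (sin c ^ 2 * sin (INR n * c) ^ 2)); [apply Rmult_lt_0_compat; apply pow_lt; lra|].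
    replace (1 / sin c ^ 2 * (sin c ^ 2 * sin (INR n * c) ^ 2)) with (sin (INR n * c) ^ 2) by (field; lra).
    replace (INR n ^ 2 / sin (INR n * c) ^ 2 * (sin c ^ 2 * sin (INR n * c) ^ 2))
      with ((INR n * sin c) ^ 2) by (field; lra).
    exact Hsq.
Qed.
End SinRatio.

Lemma f0_even (q : nat) (x : R) : f0 q (- x) = f0 q x.
Proof.
  unfold f0.
  replace (PI * - x) with (- (PI * x)) by ring.
  replace (PI * INR q * - x) with (- (PI * INR q * x)) by ring.
  rewrite !sin_neg.
  destruct (Req_EM_T (- sin (PI * x)) 0), (Req_EM_T (sin (PI * x)) 0); try lra.
  f_equal. unfold Rdiv. rewrite Rinv_opp. f_equal. ring.
Qed.

Definition f0_deriv (q : nat) (x : R) : R :=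
  PI * sin_ratio' q (PI * x) / sin_ratio q (PI * x).

Section F0.
Variable q : nat.
Hypothesis q_pos : (1 <= q)%nat.

Lemma mul_PI_range (x : R) : - / INR q < x < / INR q -> - PI < INR q * (PI * x) < PI.
Proof.
  intros Hx. pose proof PI_RGT_0. assert (Hq := le_INR _ _ q_pos). simpl in Hq.
  assert (Hqx : - 1 < INR q * x < 1).
  { assert (E : INR q * / INR q = 1) by (field; lra).
    split; nra. }
  split; nra.
Qed.

Lemma f0_eq_ln_sin_ratio (x : R) :
  - / INR q < x < / INR q -> f0 q x = ln (sin_ratio q (PI * x)).
Proof.
  intros Hx. assert (Hpos := sin_ratio_pos q q_pos _ (mul_PI_range x Hx)).
  unfold f0. destruct (Req_EM_T (sin (PI * x)) 0) as [Hs|Hs].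
  - assert (Hx0 : x = 0).
    { pose proof PI_RGT_0. pose proof (mul_PI_range x Hx).
      destruct (Rtotal_order x 0) as [Hneg|[Hzero|Hgt]]; [exfalso | exact Hzero | exfalso].
      - destruct (sin_pos_of_mul_lt_PI q q_pos (- (PI * x))) as [Hs' _]; [nra | nra |].
        rewrite sin_neg in Hs'. lra.
      - destruct (sin_pos_of_mul_lt_PI q q_pos (PI * x)) as [Hs' _]; [nra | nra |]. lra. }
    now rewrite Hx0, Rmult_0_r, sin_ratio_0.
  - replace (PI * INR q * x) with (INR q * (PI * x)) by ring.
    rewrite <- sin_ratio_mul_sin, Rabs_right.
    + f_equal. field. exact Hs.
    + unfold Rdiv. rewrite Rmult_assoc, Rinv_r by exact Hs. lra.
Qed.

Lemma is_derive_f0 (x : R) : - / INR q < x < / INR q -> is_derive (f0 q) x (f0_deriv q x).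
Proof.
  intros Hx. assert (Hpos := sin_ratio_pos q q_pos _ (mul_PI_range x Hx)).
  apply (is_derive_ext_loc (fun t => ln (sin_ratio q (PI * t)))).
  { apply (locally_interval _ x (- / INR q) (/ INR q)); simpl; try lra.
    intros y Hy1 Hy2. symmetry. apply f0_eq_ln_sin_ratio. lra. }
  replace (f0_deriv q x)
    with (scal (scal PI (sin_ratio' q (PI * x))) (/ sin_ratio q (PI * x))).
  - apply (is_derive_comp ln (fun t => sin_ratio q (PI * t))).
    + auto_derive; [exact Hpos | ring].
    + apply (is_derive_comp (sin_ratio q) (fun t => PI * t)); [apply is_derive_sin_ratio|].
      auto_derive; auto; ring.
  - unfold scal, f0_deriv; simpl; unfold mult; simpl. field. lra.
Qed.

Lemma f0_deriv_odd (x : R) : f0_deriv q (- x) = - f0_deriv q x.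
Proof.
  unfold f0_deriv. replace (PI * - x) with (- (PI * x)) by ring.
  rewrite sin_ratio'_odd, sin_ratio_even. unfold Rdiv. ring.
Qed.

Lemma f0_deriv_eq_cot_diff (x : R) :
  0 < x < / INR q -> f0_deriv q x = PI * cot_diff q (PI * x).
Proof.
  intros Hx. pose proof PI_RGT_0.
  assert (Hrange := mul_PI_range x ltac:(lra)).
  assert (Hpos := sin_ratio_pos q q_pos _ Hrange).
  destruct (sin_pos_of_mul_lt_PI q q_pos (PI * x)) as [Hs Hns]; [nra | lra |].
  unfold f0_deriv, cot_diff.
  rewrite <- sin_ratio_mul_sin, <- sin_ratio'_mul_sin. field. nra.
Qed.

Lemma f0_deriv_nonpos (x : R) : 0 <= x < / INR q -> f0_deriv q x <= 0.
Proof.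
  intros Hx. pose proof PI_RGT_0.
  destruct (Req_dec x 0) as [->|Hx0].
  - unfold f0_deriv. rewrite Rmult_0_r, sin_ratio'_0. unfold Rdiv. lra.
  - rewrite f0_deriv_eq_cot_diff by lra.
    assert (Hrange := mul_PI_range x ltac:(lra)).
    assert (cot_diff q (PI * x) <= 0) by (apply cot_diff_nonpos; [exact q_pos | nra | lra]).
    nra.
Qed.

Lemma f0_deriv_antitone (x y : R) :
  - / INR q < x -> x <= y -> y < / INR q -> f0_deriv q y <= f0_deriv q x.
Proof.
  assert (Hpos_case : forall u v, 0 < u -> u <= v -> v < / INR q -> f0_deriv q v <= f0_deriv q u).
  { intros u v Hu Huv Hv. pose proof PI_RGT_0.
    assert (Hrange := mul_PI_range v ltac:(lra)).
    rewrite !f0_deriv_eq_cot_diff by lra.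
    apply Rmult_le_compat_l; [lra|].
    apply cot_diff_antitone; [exact q_pos | nra | nra | lra]. }
  intros Hx Hxy Hy.
  destruct (Rlt_or_le 0 x) as [Hx0|Hx0]; [now apply Hpos_case|].
  rewrite <- (Ropp_involutive x), f0_deriv_odd.
  destruct (Rlt_or_le y 0) as [Hy0|Hy0].
  - rewrite <- (Ropp_involutive y), f0_deriv_odd.
    assert (f0_deriv q (- x) <= f0_deriv q (- y)) by (apply Hpos_case; lra). lra.
  - assert (f0_deriv q y <= 0) by (apply f0_deriv_nonpos; lra).
    assert (f0_deriv q (- x) <= 0) by (apply f0_deriv_nonpos; lra). lra.
Qed.

Lemma f0_slope_bounds (theta u v : R) :
  0 < theta < / INR q -> theta - / INR q <= u -> u <= v -> v <= theta ->
  Derive (f0 q) theta * (v - u) <= f0 q v - f0 q u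
  <= - Derive (f0 q) (/ INR q - theta) * (v - u).
Proof.
  intros Htheta Hu Huv Hv.
  rewrite (is_derive_unique _ _ _ (is_derive_f0 theta ltac:(lra))),
    (is_derive_unique _ _ _ (is_derive_f0 (/ INR q - theta) ltac:(lra))).
  replace (- f0_deriv q (/ INR q - theta)) with (f0_deriv q (theta - / INR q))
    by (rewrite <- f0_deriv_odd; f_equal; ring).
  apply (antitone_derive_slope_bounds (f0 q) (f0_deriv q)); try lra.
  - intros z Hz. apply is_derive_f0. lra.
  - intros z w Hz Hzw Hw. apply f0_deriv_antitone; lra.
Qed.
End F0.

Lemma fc_slope_bounds (q : nat) (c lam u v : R) :
  (1 <= q)%nat -> - / INR q - c < lam < - c ->
  lam <= u -> u <= v -> v <= lam + / INR q ->
  Derive (f0 q) (lam + / INR q + c) * (v - u) <= fc q c v - fc q c u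
  <= - Derive (f0 q) (/ INR q - (lam + / INR q + c)) * (v - u).
Proof.
  intros Hq Hlam Hu Huv Hv. unfold fc.
  replace (v - u) with ((v + c) - (u + c)) by ring.
  apply f0_slope_bounds; [exact Hq | lra ..].
Qed.

Theorem lemma5p5 (q : nat) (c lam : R) (psi : R -> R) (beta : R) :
  (2 <= q)%nat ->
  - / INR q - c < lam < - c ->
  pre_sturmian_with q c lam psi beta ->
  let theta := lam + / INR q + c in
  let f := f0 q in
  (forall x, lam + / INR q < x < lam + 2 / INR q ->
     let t := x - lam - / INR q in
     psi (INR q * x) - psi (INR q * (lam + / INR q)) >=
       f (/ INR q - theta - t) - f (/ INR q - theta)
       + Derive f theta * (t / (INR q - 1))) /\
  (forall x, lam - / INR q < x < lam ->
     let t := lam - x in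
     psi (INR q * x) - psi (INR q * lam) >=
       f (theta - t) - f theta
       + Derive f (/ INR q - theta) * (t / (INR q - 1))).
Proof.
  intros Hq Hlam [_ [Hp [Hlip Heq]]] theta f.
  assert (HQ : 1 < INR q) by (apply (lt_INR 1); lia).
  assert (Hlip' := lipschitz_T_Rabs psi Hlip).
  assert (Hcob : forall x, lam <= x <= lam + / INR q -> fc q c x + psi x - psi (INR q * x) = beta)
    by (intros x Hx; apply Heq; exists 0%Z; rewrite Rminus_0_r; exact Hx).
  assert (Hslope := fun u v => fc_slope_bounds q c lam u v ltac:(lia) Hlam).
  split.
  - intros x Hx t.
    assert (H := coboundary_increment_right (INR q) lam beta psi (fc q c) HQ Hp Hcob
      (Derive f theta) (fun u v Hu Huv Hv => Rle_ge _ _ (proj1 (Hslope u v Hu Huv Hv)))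
      Hlip' t ltac:(unfold t; lra)).
    replace (lam + / INR q + t) with x in H by (unfold t; ring).
    unfold f. rewrite <- (f0_even q (/ INR q - theta - t)), <- (f0_even q (/ INR q - theta)).
    unfold fc in H. unfold theta.
    replace (- (/ INR q - (lam + / INR q + c) - t)) with (lam + t + c) by ring.
    replace (- (/ INR q - (lam + / INR q + c))) with (lam + c) by ring.
    exact H.
  - intros x Hx t.
    assert (H := coboundary_increment_left (INR q) lam beta (Derive f (/ INR q - theta)) psi
      (fc q c) HQ Hp Hcob (fun u v Hu Huv Hv => proj2 (Hslope u v Hu Huv Hv))
      Hlip' t ltac:(unfold t; lra)).
    replace (lam - t) with x in H by (unfold t; ring).
    unfold fc in H. unfold f, theta.
    replace (lam + / INR q + c - t) with (lam + / INR q - t + c) by ring.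
    exact H.
Qed.
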